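(* Let $X_1$ ($n\times p_1$) and $X_2$ ($n\times p_2$), $p_1,p_2>0$, be centered, with $X_1^TX_2=0$ and $(X_1,X_2)$ of full column rank; the response is centered. Consider the models $M_1: y=\alpha\mathbf 1+X_1\beta_1+\epsilon$ and $M_2: y=\alpha\mathbf 1+X_1\beta_1+X_2\beta_2+\epsilon$, $\epsilon\sim N(0,\sigma^2I_n)$, where $M_2$ carries a block hyper-$g$ prior with the two blocks $X_1,X_2$ and $M_1$ carries the block hyper-$g$ prior with the single block $X_1$ (same hyperparameter $a$). Consider the sequence of problems $\Psi_N$ with data $y_N=\alpha\mathbf 1+X_1\beta_{1(N)}+X_2\beta_2+\epsilon$, where $X_1,X_2,\alpha,\beta_2,\epsilon$ are fixed and $\|\beta_{1(N)}\|\to\infty$. Then, as $N\to\infty$, the Bayes factor $BF(M_2:M_1)$ is bounded away from zero.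
   Context: Block hyper-$g$ prior with hyperparameter $2<a\le4$ for blocks $X_1,\dots,X_k$: $\pi(\alpha,\sigma^2)\propto1/\sigma^2$; $\beta\mid g,\sigma^2\sim N(0,A\sigma^2)$ with $A$ block diagonal with blocks $g_i(X_i^TX_i)^{-1}$; $g_1,\dots,g_k$ independent with densities $\frac{a-2}{2}(1+g_i)^{-a/2}$, $g_i>0$. $BF(M_2:M_1)=p(y\mid M_2)/p(y\mid M_1)$ is the ratio of marginal likelihoods. $n>p_1+p_2+1$. *)

From HB Require Import structures.
From mathcomp Require Import all_boot all_order all_algebra.
From mathcomp Require Import all_classical all_reals all_analysis.
Set Implicit Arguments. Unset Strict Implicit. Unset Printing Implicit Defensive.
Import Order.TTheory GRing.Theory Num.Theory.
Import numFieldNormedType.Exports.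
Local Open Scope classical_set_scope.
Local Open Scope ring_scope.

Section BlockHyperG.
Variable R : realType.

Definition vnorm (k : nat) (b : 'cV[R]_k) : R := Num.sqrt (\sum_i (b i 0) ^+ 2).

Definition centered (n p : nat) (X : 'M[R]_(n, p)) : Prop :=
  (const_mx 1 : 'rV[R]_n) *m X = 0.

Definition center (n : nat) (y : 'cV[R]_n) : 'cV[R]_n :=
  y - const_mx ((\sum_i y i 0) / n%:R).

Definition hyperg_dens (a g : R) : R := (a - 2) / 2 * (1 + g) `^ (- (a / 2)).

(* Marginal density of y given the g's, after integrating out alpha (flat),
   beta ~ N(0, A sigma^2) and sigma^2 (prior 1/sigma^2), up to a
   multiplicative constant depending only on n (common to all models):
     det(I + X A X^T)^(-1/2) * (yc^T (I + X A X^T)^(-1) yc)^(-(n-1)/2),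
   where yc is the centered response. *)
Definition marg_given_g (n p : nat) (X : 'M[R]_(n, p)) (A : 'M[R]_p)
    (y : 'cV[R]_n) : R :=
  let S := (1%:M + X *m A *m X^T) : 'M[R]_n in
  let yc := center y in
  (\det S) `^ (- (1 / 2)) *
  ((yc^T *m invmx S *m yc) 0 0) `^ (- ((n%:R - 1) / 2)).

Definition Ablock1 (n p1 : nat) (X1 : 'M[R]_(n, p1)) (g1 : R) : 'M[R]_p1 :=
  g1 *: invmx (X1^T *m X1).

Definition Ablock2 (n p1 p2 : nat) (X1 : 'M[R]_(n, p1)) (X2 : 'M[R]_(n, p2))
    (g1 g2 : R) : 'M[R]_(p1 + p2) :=
  block_mx (g1 *: invmx (X1^T *m X1)) 0 0 (g2 *: invmx (X2^T *m X2)).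

Definition marglik1 (n p1 : nat) (a : R) (X1 : 'M[R]_(n, p1)) (y : 'cV[R]_n)
  : \bar R :=
  (\int[lebesgue_measure]_(g1 in [set g : R | (0 < g)%R])
     (hyperg_dens a g1 * marg_given_g X1 (Ablock1 X1 g1) y)%:E)%E.

Definition marglik2 (n p1 p2 : nat) (a : R) (X1 : 'M[R]_(n, p1))
    (X2 : 'M[R]_(n, p2)) (y : 'cV[R]_n) : \bar R :=
  (\int[lebesgue_measure]_(g1 in [set g : R | (0 < g)%R])
     \int[lebesgue_measure]_(g2 in [set g : R | (0 < g)%R])
       (hyperg_dens a g1 * hyperg_dens a g2 *
        marg_given_g (row_mx X1 X2) (Ablock2 X1 X2 g1 g2) y)%:E)%E.

End BlockHyperG.

(* Given the g's, the marginal likelihood depends on the response only through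
   det S and the quadratic form yc^T S^-1 yc, where S = I + X A X^T.  For
   orthogonal blocks S = I + g1 P1 + g2 P2 with P_i the orthogonal projection
   onto the columns of X_i, hence det S = (1+g1)^p1 (1+g2)^p2 and
   S^-1 = I - g1/(1+g1) P1 - g2/(1+g2) P2.  Adding the second block therefore
   only decreases the quadratic form, i.e. increases its power -(n-1)/2, and
   costs at most the factor 2^(-p2/2) in the determinant when g2 <= 1.
   Restricting the g2-integral to ]0, 1], where the hyper-g density is at least
   its value at 1, gives BF(M2:M1) >= pi(1) 2^(-p2/2) for every response, in
   particular along the sequence y_N. *)

From Pilot Require Import Defs.
From HB Require Import structures.
From mathcomp Require Import all_boot all_order all_algebra.
From mathcomp Require Import all_classical all_reals all_analysis.
From mathcomp Require Import ring lra zify.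
Import Order.TTheory GRing.Theory Num.Theory.
Import numFieldNormedType.Exports.
Local Open Scope classical_set_scope.
Local Open Scope ring_scope.
Set Implicit Arguments. Unset Strict Implicit.

Section Gram.
Variable R : realFieldType.

Lemma mulmx_trmx_ge0 (k : nat) (v : 'rV[R]_k) : 0 <= (v *m v^T) 0 0.
Proof. by rewrite !mxE; apply: sumr_ge0 => j _; rewrite mxE sqr_ge0. Qed.

Lemma mulmx_trmx_eq0 (k : nat) (v : 'rV[R]_k) : (v *m v^T) 0 0 = 0 -> v = 0.
Proof.
rewrite !mxE => /eqP; rewrite psumr_eq0; last by move=> j _; rewrite mxE sqr_ge0.
move=> /allP v0; apply/rowP => j; rewrite mxE.
by have := v0 j (mem_index_enum j); rewrite mxE mulf_eq0 orbb => /eqP.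
Qed.

Lemma gram_unitmx (m p : nat) (X : 'M[R]_(m, p)) :
  \rank X = p -> X^T *m X \in unitmx.
Proof.
move=> rX; rewrite -row_free_unit; apply: inj_row_free => v vXX.
have fXT : row_free X^T by rewrite /row_free mxrank_tr rX.
have /eqP : v *m X^T = 0.
  apply: mulmx_trmx_eq0.
  by rewrite trmx_mul trmxK mulmxA -(mulmxA v) vXX mul0mx mxE.
by rewrite mulmx_free_eq0 // => /eqP.
Qed.

Lemma rank_row_mx_full (n p1 p2 : nat) (X1 : 'M[R]_(n, p1)) (X2 : 'M[R]_(n, p2)) :
  \rank (row_mx X1 X2) = (p1 + p2)%N -> \rank X1 = p1 /\ \rank X2 = p2.
Proof.
move=> r; have /leqifP := mxrank_adds_leqif X1^T X2^T.
rewrite addsmxE -tr_row_mx !mxrank_tr r.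
have := rank_leq_row X1^T; have := rank_leq_row X2^T; rewrite !mxrank_tr.
by case: ifP => _; lia.
Qed.

End Gram.

Section Sylvester.
Variable R : comUnitRingType.

(* Both sides are the determinant of [[1, -A], [B, 1]], by two block factorizations. *)
Lemma det_1_mulmxC (m p : nat) (A : 'M[R]_(m, p)) (B : 'M[R]_(p, m)) :
  \det (1%:M + A *m B) = \det (1%:M + B *m A).
Proof.
have eL : block_mx 1%:M (-A) B 1%:M =
    block_mx 1%:M 0 B 1%:M *m block_mx 1%:M (-A) 0 (1%:M + B *m A).
  rewrite mulmx_block !mul1mx ?mul0mx ?mulmx0 ?mulmx1 ?addr0 ?add0r.
  by rewrite mulmxN addrC addrK.
have eR : block_mx 1%:M (-A) B 1%:M =
    block_mx (1%:M + A *m B) (-A) 0 1%:M *m block_mx 1%:M 0 B 1%:M.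
  rewrite mulmx_block !mul1mx ?mul0mx ?mulmx0 ?mulmx1 ?addr0 ?add0r.
  by rewrite mulNmx addrK.
have := congr1 determinant eL; rewrite eR !det_mulmx det_lblock !det_ublock.
by rewrite !det1 !mul1r !mulr1.
Qed.

Lemma mulmx1_invmx (n : nat) (A B : 'M[R]_n) : A *m B = 1%:M -> invmx A = B.
Proof.
move=> AB; have [Au _] := mulmx1_unit AB.
by rewrite -[invmx A]mulmx1 -AB mulmxA mulVmx // mul1mx.
Qed.

End Sylvester.

Section HatMatrix.
Variables (R : fieldType) (n : nat).

Definition hatmx (p : nat) (X : 'M[R]_(n, p)) : 'M[R]_n :=
  X *m invmx (X^T *m X) *m X^T.

Lemma trmx_hatmx (p : nat) (X : 'M[R]_(n, p)) : (hatmx X)^T = hatmx X.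
Proof. by rewrite /hatmx !trmx_mul trmxK trmx_inv trmx_mul trmxK mulmxA. Qed.

Lemma hatmx_idem (p : nat) (X : 'M[R]_(n, p)) :
  X^T *m X \in unitmx -> hatmx X *m hatmx X = hatmx X.
Proof.
move=> XXu; rewrite /hatmx !mulmxA -(mulmxA (X *m invmx (X^T *m X)) X^T X).
by rewrite -(mulmxA (X *m invmx (X^T *m X))) mulmxV // mulmx1.
Qed.

Lemma hatmx_orth (p q : nat) (X : 'M[R]_(n, p)) (Y : 'M[R]_(n, q)) :
  X^T *m Y = 0 -> hatmx X *m hatmx Y = 0.
Proof.
move=> XY; rewrite /hatmx !mulmxA -(mulmxA (X *m invmx (X^T *m X)) X^T Y) XY.
by rewrite mulmx0 !mul0mx.
Qed.

Lemma det_1_hatmx (p : nat) (X : 'M[R]_(n, p)) (g : R) :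
  X^T *m X \in unitmx -> \det (1%:M + g *: hatmx X) = (1 + g) ^+ p.
Proof.
move=> XXu; rewrite /hatmx -mulmxA scalemxAr det_1_mulmxC -scalemxAl -mulmxA.
by rewrite mulVmx // -{1}(scale1r 1%:M) -scalerDl scalemx1 det_scalar.
Qed.

End HatMatrix.

Section Projections.
Variables (R : fieldType) (n : nat) (P Q : 'M[R]_n).
Hypotheses (PP : P *m P = P) (PQ : P *m Q = 0).

Definition shrink (g : R) : R := g / (1 + g).

Lemma mulmx_1_proj_shrink (g : R) : 1 + g != 0 ->
  (1%:M + g *: P) *m (1%:M - shrink g *: P) = 1%:M.
Proof.
move=> g1; rewrite mulmxDl !mulmxBr !mul1mx !mulmx1 -!scalemxAl -scalemxAr PP.
rewrite scalerA -addrA; apply/eqP; rewrite addrC -subr_eq0 addrK.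
rewrite -scalerBl -scaleNr -scalerDl scaler_eq0.
by rewrite [_ + _](_ : _ = 0) ?eqxx // /shrink; field.
Qed.

Lemma invmx_1_proj (g : R) : 1 + g != 0 ->
  invmx (1%:M + g *: P) = 1%:M - shrink g *: P.
Proof. by move=> g1; apply: mulmx1_invmx; apply: mulmx_1_proj_shrink. Qed.

Lemma mulmx_1_proj_orth (a b : R) :
  (1%:M + a *: P) *m (1%:M + b *: Q) = 1%:M + a *: P + b *: Q.
Proof.
rewrite mulmxDl !mulmxDr !mul1mx mulmx1 -scalemxAl -scalemxAr PQ !scaler0 addr0.
by rewrite addrAC.
Qed.

End Projections.

Lemma shrink_ge0 (R : realFieldType) (g : R) : 0 <= g -> 0 <= shrink g.
Proof. by move=> g0; rewrite divr_ge0 // addr_ge0. Qed.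

Lemma shrink_lt1 (R : realFieldType) (g : R) : 0 <= g -> shrink g < 1.
Proof. by move=> g0; rewrite ltr_pdivrMr ?mul1r ?ltrDr //; lra. Qed.

Section QuadraticForm.
Variables (R : realFieldType) (n : nat) (w : 'cV[R]_n).

Definition qform (M : 'M[R]_n) : R := (w^T *m M *m w) 0 0.

Lemma qformD (M N : 'M[R]_n) : qform (M + N) = qform M + qform N.
Proof. by rewrite /qform mulmxDr mulmxDl mxE. Qed.

Lemma qformZ (a : R) (M : 'M[R]_n) : qform (a *: M) = a * qform M.
Proof. by rewrite /qform -scalemxAr -scalemxAl mxE. Qed.

Lemma qformB (M N : 'M[R]_n) : qform (M - N) = qform M - qform N.
Proof. by rewrite -scaleN1r qformD qformZ mulN1r. Qed.

Lemma qform_proj_ge0 (M : 'M[R]_n) : M^T = M -> M *m M = M -> 0 <= qform M.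
Proof.
move=> MT MM; have -> : qform M = ((w^T *m M) *m (w^T *m M)^T) 0 0.
  by rewrite trmx_mul MT trmxK /qform !mulmxA -(mulmxA _ M M) MM.
exact: mulmx_trmx_ge0.
Qed.

Lemma qform1_gt0 : w != 0 -> 0 < qform 1%:M.
Proof.
move=> w0; rewrite /qform mulmx1 -{2}(trmxK w) lt_neqAle mulmx_trmx_ge0 andbT.
apply: contra w0 => /eqP/esym/mulmx_trmx_eq0 wT0.
by rewrite -(trmxK w) wT0 trmx0.
Qed.

End QuadraticForm.

Section TwoProjections.
Variables (R : realFieldType) (n : nat) (P Q : 'M[R]_n).
Hypotheses (PT : P^T = P) (QT : Q^T = Q).
Hypotheses (PP : P *m P = P) (QQ : Q *m Q = Q) (PQ : P *m Q = 0).

Lemma proj_orthC : Q *m P = 0.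
Proof. by rewrite -PT -QT -trmx_mul PQ trmx0. Qed.

Lemma invmx_1_proj2 (g1 g2 : R) : 1 + g1 != 0 -> 1 + g2 != 0 ->
  invmx (1%:M + (g1 *: P + g2 *: Q)) = 1%:M - shrink g1 *: P - shrink g2 *: Q.
Proof.
move=> g11 g21; apply: mulmx1_invmx.
have -> : 1%:M - shrink g1 *: P - shrink g2 *: Q =
    (1%:M - shrink g2 *: Q) *m (1%:M - shrink g1 *: P).
  by rewrite -!scaleNr mulmx_1_proj_orth ?proj_orthC // addrAC.
rewrite addrA -mulmx_1_proj_orth // mulmxA -(mulmxA _ _ (1%:M - _ *: Q)).
by rewrite mulmx_1_proj_shrink // mulmx1 mulmx_1_proj_shrink.
Qed.

Variable w : 'cV[R]_n.

Lemma qform_proj2_le : qform w P + qform w Q <= qform w 1%:M.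
Proof.
rewrite -subr_ge0 -qformD -qformB; apply: qform_proj_ge0.
  by rewrite linearB linearD /= trmx1 PT QT.
rewrite mulmxBl mulmxDl !mulmxBr !mulmxDr !mul1mx !mulmx1 PP QQ PQ proj_orthC.
by rewrite !add0r !addr0 opprD !addrA subrr add0r subrr subr0.
Qed.

Lemma qform_shrink2_le (t1 t2 : R) : 0 <= t2 ->
  qform w (1%:M - t1 *: P - t2 *: Q) <= qform w (1%:M - t1 *: P).
Proof.
move=> t2ge0; rewrite qformB qformZ gerBl.
exact: mulr_ge0 (qform_proj_ge0 w QT QQ).
Qed.

Lemma qform_shrink2_gt0 (t1 t2 : R) : 0 <= t1 < 1 -> 0 <= t2 < 1 -> w != 0 ->
  0 < qform w (1%:M - t1 *: P - t2 *: Q).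
Proof.
move=> /andP[t10 t11] /andP[t20 t21] w0.
have := qform_proj2_le; have := qform1_gt0 w0.
have := qform_proj_ge0 w PT PP; have := qform_proj_ge0 w QT QQ.
rewrite !qformB !qformZ.
set q := qform w 1%:M; set qP := qform w P; set qQ := qform w Q => qQ0 qP0 q0 qPQ.
(* The form is a combination with nonnegative weights of q > 0 and of
   qP, qQ, q - qP - qQ >= 0. *)
have : 0 < (1 - t1) * (1 - t2) * q by rewrite !mulr_gt0 // subr_gt0.
have : 0 <= (t1 + t2 - t1 * t2) * (q - qP - qQ) by rewrite mulr_ge0 //; nra.
have : 0 <= (1 - t1) * t2 * qP by rewrite !mulr_ge0 // subr_ge0 ltW.
have : 0 <= (1 - t2) * t1 * qQ by rewrite !mulr_ge0 // subr_ge0 ltW.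
lra.
Qed.

End TwoProjections.

Lemma ler_powRN (R : realType) (x y r : R) : 0 < x -> x <= y -> 0 <= r ->
  y `^ (- r) <= x `^ (- r).
Proof.
move=> x0 xy r0; have y0 := lt_le_trans x0 xy.
rewrite !powRN lef_pV2 ?posrE ?powR_gt0 //.
by apply: ge0_ler_powR => //; rewrite nnegrE ltW.
Qed.

Section Marginals.
Variables (R : realType) (n p1 p2 : nat) (X1 : 'M[R]_(n, p1)) (X2 : 'M[R]_(n, p2)).
Hypotheses (X1u : X1^T *m X1 \in unitmx) (X2u : X2^T *m X2 \in unitmx).
Hypothesis X12 : X1^T *m X2 = 0.

Lemma mulmx_Ablock1 (g : R) : X1 *m Ablock1 X1 g *m X1^T = g *: hatmx X1.
Proof. by rewrite /Ablock1 -!scalemxAr -!scalemxAl. Qed.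

Lemma mulmx_Ablock2 (g1 g2 : R) :
  row_mx X1 X2 *m Ablock2 X1 X2 g1 g2 *m (row_mx X1 X2)^T =
  g1 *: hatmx X1 + g2 *: hatmx X2.
Proof.
rewrite mul_row_block !mulmx0 addr0 add0r tr_row_mx mul_row_col.
by rewrite -!scalemxAr -!scalemxAl.
Qed.

Lemma marg_given_g_block1 (y : 'cV[R]_n) (g : R) : 0 <= g ->
  marg_given_g X1 (Ablock1 X1 g) y =
  ((1 + g) ^+ p1) `^ (- (1 / 2)) *
  qform (Defs.center y) (1%:M - shrink g *: hatmx X1) `^ (- ((n%:R - 1) / 2)).
Proof.
move=> g0; have g1 : 1 + g != 0 by apply: lt0r_neq0; lra.
by rewrite /marg_given_g mulmx_Ablock1 det_1_hatmx // invmx_1_proj ?hatmx_idem.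
Qed.

Lemma marg_given_g_block2 (y : 'cV[R]_n) (g1 g2 : R) : 0 <= g1 -> 0 <= g2 ->
  marg_given_g (row_mx X1 X2) (Ablock2 X1 X2 g1 g2) y =
  ((1 + g1) ^+ p1 * (1 + g2) ^+ p2) `^ (- (1 / 2)) *
  qform (Defs.center y) (1%:M - shrink g1 *: hatmx X1 - shrink g2 *: hatmx X2)
    `^ (- ((n%:R - 1) / 2)).
Proof.
move=> g10 g20; have g11 : 1 + g1 != 0 by apply: lt0r_neq0; lra.
have g21 : 1 + g2 != 0 by apply: lt0r_neq0; lra.
have HH : hatmx X1 *m hatmx X2 = 0 by exact: hatmx_orth.
rewrite /marg_given_g mulmx_Ablock2 addrA -mulmx_1_proj_orth // det_mulmx.
rewrite !det_1_hatmx // mulmx_1_proj_orth // -addrA.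
by rewrite invmx_1_proj2 ?trmx_hatmx ?hatmx_idem.
Qed.

Lemma marg_given_g_block2_ge (y : 'cV[R]_n) (g1 g2 : R) :
  (1 < n)%N -> 0 <= g1 -> 0 <= g2 <= 1 ->
  ((1 + 1) ^+ p2) `^ (- (1 / 2)) * marg_given_g X1 (Ablock1 X1 g1) y <=
  marg_given_g (row_mx X1 X2) (Ablock2 X1 X2 g1 g2) y.
Proof.
move=> n1 g10 /andP[g20 g21].
have g1_ge0 : 0 <= 1 + g1 by lra.
have g2_ge0 : 0 <= 1 + g2 by lra.
rewrite marg_given_g_block1 // marg_given_g_block2 // powRM ?exprn_ge0 //.
set e := (n%:R - 1) / 2; have e0 : 0 < e by rewrite divr_gt0 // subr_gt0 ltr1n.
set w := Defs.center y.
set q1 := qform w (_ - _ *: _); set q2 := qform w (_ - _ - _).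
rewrite mulrCA -mulrA; apply: ler_wpM2l; first exact: powR_ge0.
(* For a vanishing centered response both sides are 0, since 0 `^ (- e) = 0. *)
have [w0|w0] := eqVneq w 0.
  rewrite [q1](_ : _ = 0); last by rewrite /q1 /qform w0 mulmx0 mxE.
  by rewrite powR0 ?oppr_eq0 ?gt_eqF // mulr0 mulr_ge0 ?powR_ge0.
have PT := trmx_hatmx X1; have QT := trmx_hatmx X2.
have PP := hatmx_idem X1u; have QQ := hatmx_idem X2u; have PQ := hatmx_orth X12.
have q2_gt0 : 0 < q2.
  by apply: qform_shrink2_gt0; rewrite ?shrink_ge0 ?shrink_lt1.
have q21 : q2 <= q1 by apply: qform_shrink2_le; rewrite ?shrink_ge0.
apply: ler_pM; [exact: powR_ge0 | exact: powR_ge0 | | exact: ler_powRN q2_gt0 q21 (ltW e0)].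
apply: ler_powRN; first by rewrite exprn_gt0 //; lra.
  by apply: lerXn2r; rewrite ?nnegrE //; lra.
by rewrite divr_ge0.
Qed.

End Marginals.

Section NonnegIntegral.
Context {R : realType}.
Local Open Scope ereal_scope.
Let mu := (@lebesgue_measure R).

(* No measurability is needed: the integral of a nonnegative function is the
   supremum of the integrals of the simple functions below it. *)
Lemma le_ge0_integral (D : set R) (f g : R -> \bar R) :
  (forall x, D x -> 0 <= f x) -> (forall x, D x -> f x <= g x) ->
  \int[mu]_(x in D) f x <= \int[mu]_(x in D) g x.
Proof.
move=> f0 fg.
have g0 x : D x -> 0 <= g x by move=> Dx; exact: le_trans (f0 x Dx) (fg x Dx).
rewrite !ge0_integralE//; apply: ereal_sup_le => _ [h hf <-]; exists h => //= x.
apply: le_trans (hf x) _; rewrite /patch; case: ifP => // /[!inE]; exact: fg.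
Qed.

Lemma le_ge0_integralZl (D : set R) (f : R -> \bar R) (k : R) : (0 < k)%R ->
  (forall x, D x -> 0 <= f x) ->
  k%:E * \int[mu]_(x in D) f x <= \int[mu]_(x in D) (k%:E * f x).
Proof.
move=> k0 f0.
have kf0 x : D x -> 0 <= k%:E * f x.
  by move=> Dx; apply: mule_ge0; [rewrite lee_fin ltW|exact: f0].
rewrite -lee_pdivlMl// ge0_integralE//; apply: ge_ereal_sup => _ [h hf <-].
rewrite lee_pdivlMl// -sintegralrM ge0_integralE//.
apply: ereal_sup_ubound; exists (scale_nnsfun h (ltW k0)) => //= x.
have := hf x; rewrite /patch; case: ifP => _ hx.
  by rewrite EFinM; apply: lee_wpmul2l => //; rewrite lee_fin ltW.
by move: hx; rewrite !lee_fin => hx; rewrite mulr_ge0_le0// ltW.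
Qed.

End NonnegIntegral.

Lemma integral_gt0_indic01 (R : realType) (k : R) : 0 <= k ->
  (\int[lebesgue_measure]_(x in [set g : R | (0 < g)%R])
     (k * \1_(`]0, 1]%classic : set R) x)%:E = k%:E)%E.
Proof.
move=> k0.
have mD : measurable ([set g : R | 0 < g] : set (measurableTypeR R)).
  rewrite (_ : [set g | _] = `]0, +oo[%classic); first exact: measurable_itv.
  by apply/seteqP; split=> x /=; rewrite in_itv /= andbT.
have m01 : measurable (`]0, 1]%classic : set (measurableTypeR R)) by exact: measurable_itv.
have := @integralZl_indic _ _ _ lebesgue_measure _ mD (fun=> `]0, 1]%classic) k.
rewrite /= => -> //; last by rewrite ltNge k0.
rewrite integral_indic // setIidl; last by move=> x /=; rewrite in_itv /= => /andP[].
have := @lebesgue_measure_itv R `]0%R, 1%R]; rewrite /= lte_fin ltr01 oppr0 adde0.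
by move=> ->; rewrite mule1.
Qed.

Section HyperG.
Variable R : realType.

Lemma hyperg_dens_ge0 (a g : R) : 2 < a -> 0 <= hyperg_dens a g.
Proof. by move=> a2; rewrite /hyperg_dens mulr_ge0 ?powR_ge0 // divr_ge0 //; lra. Qed.

Lemma hyperg_dens_gt0 (a g : R) : 2 < a -> 0 <= g -> 0 < hyperg_dens a g.
Proof.
by move=> a2 g0; rewrite /hyperg_dens mulr_gt0 ?divr_gt0 ?powR_gt0 //; lra.
Qed.

Lemma hyperg_dens_ge1 (a g : R) : 2 < a -> 0 <= g <= 1 ->
  hyperg_dens a 1 <= hyperg_dens a g.
Proof.
move=> a2 /andP[g0 g1]; apply: ler_wpM2l; first by rewrite divr_ge0 //; lra.
by apply: ler_powRN; rewrite ?divr_ge0 //; lra.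
Qed.

End HyperG.

Lemma marg_given_g_ge0 (R : realType) (n p : nat) (X : 'M[R]_(n, p)) (A : 'M[R]_p)
  (y : 'cV[R]_n) : 0 <= marg_given_g X A y.
Proof. by rewrite /marg_given_g mulr_ge0 ?powR_ge0. Qed.

Definition bf_lbound (R : realType) (a : R) (p2 : nat) : R :=
  hyperg_dens a 1 * ((1 + 1) ^+ p2) `^ (- (1 / 2)).

Section BayesFactor.
Variables (R : realType) (n p1 p2 : nat) (a : R).
Variables (X1 : 'M[R]_(n, p1)) (X2 : 'M[R]_(n, p2)).
Hypotheses (n_gt1 : (1 < n)%N) (a_gt2 : 2 < a).
Hypotheses (X1u : X1^T *m X1 \in unitmx) (X2u : X2^T *m X2 \in unitmx).
Hypothesis X12 : X1^T *m X2 = 0.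

Lemma bf_lbound_gt0 : 0 < bf_lbound a p2.
Proof. by rewrite mulr_gt0 ?hyperg_dens_gt0 ?ler01 // powR_gt0 // exprn_gt0. Qed.

Lemma marglik_integrand_le (y : 'cV[R]_n) (g1 g2 : R) : 0 <= g1 -> 0 <= g2 ->
  bf_lbound a p2 * (hyperg_dens a g1 * marg_given_g X1 (Ablock1 X1 g1) y) *
    \1_(`]0, 1]%classic : set R) g2 <=
  hyperg_dens a g1 * hyperg_dens a g2 *
    marg_given_g (row_mx X1 X2) (Ablock2 X1 X2 g1 g2) y.
Proof.
move=> g10 g20; rewrite indicE; case: (boolP (g2 \in _)) => [|_]; last first.
  by rewrite mulr0 mulr_ge0 ?marg_given_g_ge0 // mulr_ge0 ?hyperg_dens_ge0.
rewrite inE /= in_itv /= => /andP[_ g21]; rewrite mulr1 /bf_lbound.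
set c := (_ `^ _)%R; set m1 := marg_given_g _ _ _; set m2 := marg_given_g _ _ _.
have -> : hyperg_dens a 1 * c * (hyperg_dens a g1 * m1) =
    hyperg_dens a g1 * (hyperg_dens a 1 * (c * m1)) by ring.
rewrite -mulrA; apply: ler_wpM2l; first exact: hyperg_dens_ge0.
apply: ler_pM; rewrite ?hyperg_dens_ge0 ?hyperg_dens_ge1 ?g20 //.
  by rewrite mulr_ge0 ?powR_ge0 ?marg_given_g_ge0.
by apply: marg_given_g_block2_ge; rewrite ?g20.
Qed.

Lemma marglik2_ge (y : 'cV[R]_n) :
  ((bf_lbound a p2)%:E * marglik1 a X1 y <= marglik2 a X1 X2 y)%E.
Proof.
have c0 := bf_lbound_gt0.
have f0 g : 0 <= hyperg_dens a g * marg_given_g X1 (Ablock1 X1 g) y.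
  by rewrite mulr_ge0 ?hyperg_dens_ge0 ?marg_given_g_ge0.
apply: le_trans (le_ge0_integralZl c0 _) _ => [g _|]; first by rewrite lee_fin.
apply: le_ge0_integral => g1 g1_gt0; first by rewrite mule_ge0 // lee_fin ?f0 // ltW.
rewrite -EFinM -integral_gt0_indic01; last by rewrite mulr_ge0 ?f0 // ltW.
apply: le_ge0_integral => g2 g2_gt0.
  by rewrite lee_fin indicE; case: (_ \in _); rewrite ?mulr1 ?mulr0 // mulr_ge0 ?f0 // ltW.
by rewrite lee_fin marglik_integrand_le // ltW.
Qed.

End BayesFactor.

Unset Implicit Arguments.

Theorem theorem4p2 (R : realType) (n p1 p2 : nat) (a : R)
    (X1 : 'M[R]_(n, p1)) (X2 : 'M[R]_(n, p2)) (alpha : R)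
    (beta1 : nat -> 'cV[R]_p1) (beta2 : 'cV[R]_p2) (eps : 'cV[R]_n) :
  (0 < p1)%N -> (0 < p2)%N -> (p1 + p2 + 1 < n)%N ->
  2 < a -> a <= 4 ->
  centered X1 -> centered X2 -> X1^T *m X2 = 0 ->
  \rank (row_mx X1 X2) = (p1 + p2)%N ->
  (fun N => vnorm (beta1 N)) @ \oo --> +oo ->
  let y := fun N : nat =>
    alpha *: (const_mx 1 : 'cV[R]_n) + X1 *m beta1 N + X2 *m beta2 + eps in
  exists c : R, 0 < c /\
    \forall N \near \oo,
      (c%:E * marglik1 a X1 (y N) <= marglik2 a X1 X2 (y N))%E.
Proof.
move=> _ _ np a_gt2 _ _ _ X12 rkX _ y.
have [rk1 rk2] := rank_row_mx_full rkX.
have n_gt1 : (1 < n)%N by lia.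
exists (bf_lbound a p2); split; first exact: bf_lbound_gt0.
apply: nearW => N.
exact: marglik2_ge n_gt1 a_gt2 (gram_unitmx rk1) (gram_unitmx rk2) X12 (y N).
Qed.
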